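(* Let $\mathcal F$ be a family of graphs in which every member has the same number $e$ of edges, and let $n$ be a positive integer. Then $x(n,\mathcal F)+e=x'(n,\mathcal F)$.
   Context: Search game: given a vertex set $V$ with $|V|=n$, an unknown edge set $E_0$ of pairs from $V$ is hidden such that the graph $(V,E_0)$ is isomorphic to some $F\in\mathcal F$ together with $n-|V(F)|$ isolated vertices. A query is a pair of vertices, answered YES if it lies in $E_0$ and NO otherwise; queries are chosen adaptively by the Questioner and answered consistently by an Adversary. $E_0$ is identified when exactly one admissible edge set is consistent with all answers. $x(n,\mathcal F)$ is the number of NO answers needed in the worst case by the best strategy to identify $E_0$ (only NO answers are counted). $x'(n,\mathcal F)$ is the total number of queries needed in the worst case by the best strategy in the variant where the game ends only when $E_0$ is identified and moreover every pair of $E_0$ has been queried. *)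

From mathcomp Require Import all_boot.
Set Implicit Arguments. Unset Strict Implicit. Unset Printing Implicit Defensive.

(* A family of (finite, simple) graphs: a graph is given by a number k of
   vertices (vertex set 'I_k) and an edge set, a set of subsets of 'I_k. *)
Definition graph_family := forall k : nat, {set {set 'I_k}} -> Prop.

(* E is admissible: (V, E) is isomorphic to some F in Fam together with
   n - |V(F)| isolated vertices, i.e. there is an injection phi : V(F) -> V
   mapping the edge set of F onto E. *)
Definition admissible (n : nat) (Fam : graph_family) (E : {set {set 'I_n}}) : Prop :=
  exists (k : nat) (G : {set {set 'I_k}}) (phi : 'I_k -> 'I_n),
    [/\ Fam k G, injective phi & E = [set phi @: f | f : {set 'I_k} in G]].

Definition is_pair n (p : {set 'I_n}) : bool := #|p| == 2.

Section Game.
Variables (n : nat) (adm : {set {set 'I_n}} -> Prop).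

(* E is consistent with the answers so far: Y = pairs answered YES,
   N = pairs answered NO *)
Definition consistent_with (Y N E : {set {set 'I_n}}) : Prop :=
  [/\ adm E, Y \subset E & [disjoint E & N]].

Definition consistent (Y N : {set {set 'I_n}}) : Prop :=
  exists E, consistent_with Y N E.

Definition identified_as (Y N E : {set {set 'I_n}}) : Prop :=
  consistent_with Y N E /\ forall E', consistent_with Y N E' -> E' = E.

(* win1 Y N k : from the position (Y, N), the Questioner has a strategy that
   identifies E0 whatever the (consistent) Adversary answers, receiving at
   most k NO answers. *)
Inductive win1 : {set {set 'I_n}} -> {set {set 'I_n}} -> nat -> Prop :=
| win1_done Y N k E : identified_as Y N E -> win1 Y N k
| win1_query Y N k p : is_pair p ->
    (consistent (p |: Y) N -> win1 (p |: Y) N k) ->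
    (consistent Y (p |: N) -> 0 < k /\ win1 Y (p |: N) k.-1) ->
    win1 Y N k.

(* win2 Y N k : from (Y, N), the Questioner can force, within at most k
   further queries, that E0 is identified and every pair of E0 has been
   queried. *)
Inductive win2 : {set {set 'I_n}} -> {set {set 'I_n}} -> nat -> Prop :=
| win2_done Y N k E : identified_as Y N E -> E \subset Y -> win2 Y N k
| win2_query Y N k p : is_pair p ->
    (consistent (p |: Y) N -> win2 (p |: Y) N k) ->
    (consistent Y (p |: N) -> win2 Y (p |: N) k) ->
    win2 Y N k.+1.

End Game.

Definition is_x (n : nat) (Fam : graph_family) (v : nat) : Prop :=
  win1 (@admissible n Fam) set0 set0 v /\
  forall k, win1 (@admissible n Fam) set0 set0 k -> v <= k.

Definition is_x' (n : nat) (Fam : graph_family) (v : nat) : Prop :=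
  win2 (@admissible n Fam) set0 set0 v /\
  forall k, win2 (@admissible n Fam) set0 set0 k -> v <= k.

From mathcomp Require Import all_boot zify.
From Stdlib Require Import Classical Wf_nat.
Set Implicit Arguments. Unset Strict Implicit. Unset Printing Implicit Defensive.

(* Every admissible edge set has exactly e edges, so in a consistent position
   (Y, N) exactly e - |Y| edges of E0 are still unconfirmed and at most
   e - |Y| further queries can be answered YES.  Hence a strategy receiving at
   most k NO answers uses at most k + (e - |Y|) queries, even after appending
   queries of the edges of E0 still missing once E0 is identified.
   Conversely, a strategy that queries all of E0 within k queries receives at
   least e - |Y| YES answers, hence at most k - (e - |Y|) NO answers.  At the
   start |Y| = 0, which gives x' = x + e. *)

Section SearchGame.
Variables (n e : nat) (adm : {set {set 'I_n}} -> Prop).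
Implicit Types (Y N E : {set {set 'I_n}}) (p : {set 'I_n}).

Section Win1Induction.
Variable P : {set {set 'I_n}} -> {set {set 'I_n}} -> nat -> Prop.
Hypothesis P_done : forall Y N k E, identified_as adm Y N E -> P Y N k.
Hypothesis P_query : forall Y N k p, is_pair p ->
  (consistent adm (p |: Y) N -> P (p |: Y) N k) ->
  (consistent adm Y (p |: N) -> 0 < k /\ P Y (p |: N) k.-1) -> P Y N k.

(* The NO premise of win1_query nests win1 under a conjunction, for which the
   generated win1_ind gives no induction hypothesis. *)
Fixpoint win1_nested_ind Y N k (w : win1 adm Y N k) : P Y N k :=
  match w with
  | win1_done _ _ _ _ idE => P_done _ idE
  | win1_query _ _ _ _ p_pair W_yes W_no =>
      P_query p_pair (fun C => win1_nested_ind (W_yes C))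
        (fun C => let: conj k_gt0 W := W_no C in conj k_gt0 (win1_nested_ind W))
  end.

End Win1Induction.

Lemma win1_mono Y N k k' : win1 adm Y N k -> k <= k' -> win1 adm Y N k'.
Proof.
move=> W; move: k'.
elim/win1_nested_ind: Y N k / W => [Y N k E idE | Y N k p p_pair IHyes IHno] k' le_kk'.
  exact: win1_done idE.
apply: win1_query p_pair _ _ => [Cy | Cn]; first exact: IHyes.
by have [k_gt0 IH] := IHno Cn; split; [lia | apply: IH; lia].
Qed.

Lemma win2_mono Y N k k' : win2 adm Y N k -> k <= k' -> win2 adm Y N k'.
Proof.
move=> W; elim: W k' => {Y N k} [Y N k E idE EY | Y N k p p_pair _ IHyes _ IHno] k' le_kk'.
  exact: win2_done idE EY.
case: k' le_kk' => // k' le_kk'.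
by apply: win2_query p_pair _ _ => C; [exact: IHyes | exact: IHno].
Qed.

Lemma consistent_answer Y N p : consistent adm Y N ->
  consistent adm (p |: Y) N \/ consistent adm Y (p |: N).
Proof.
case=> E [aE YE dE]; have [pE | pE] := boolP (p \in E); [left | right].
  by exists E; split; rewrite // subUset sub1set pE.
exists E; split=> //.
by rewrite disjoints_subset setCU subsetI -!disjoints_subset dE andbT disjoint_sym disjoints1.
Qed.

Hypothesis adm_card : forall E, adm E -> #|E| = e.

Lemma consistent_card Y N : consistent adm Y N -> #|Y| <= e.
Proof. by case=> E [aE YE _]; rewrite -(adm_card aE) subset_leq_card. Qed.

Lemma consistent_setU1_card Y N p :
  p \notin Y -> consistent adm (p |: Y) N -> #|Y| < e.
Proof. by move=> pY /consistent_card; rewrite cardsU1 pY. Qed.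

Lemma win1_of_win2 Y N k : win2 adm Y N k -> consistent adm Y N ->
  e - #|Y| <= k /\ win1 adm Y N (k - (e - #|Y|)).
Proof.
elim=> {Y N k} [Y N k E idE EY | Y N k p p_pair _ IHyes _ IHno] C.
  have [[aE YE _] _] := idE.
  have YisE : Y = E by apply/eqP; rewrite eqEsubset YE EY.
  have -> : #|Y| = e by rewrite YisE adm_card.
  by rewrite subnn subn0; split=> //; exact: win1_done idE.
have [pY | pY] := boolP (p \in Y).
  have pYY : p |: Y = Y by apply/setUidPr; rewrite sub1set.
  move: IHyes; rewrite pYY => /(_ C C) [le_k W].
  by split; [lia | apply: win1_mono W _; lia].
split.
  case: (consistent_answer p C) => [Cy | Cn].
    by have [] := IHyes Cy Cy; rewrite cardsU1 pY; lia.
  by have [] := IHno Cn Cn; lia.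
apply: win1_query p_pair _ _ => [Cy | Cn].
  have lt_Ye := consistent_setU1_card pY Cy.
  have [_ W] := IHyes Cy Cy; rewrite cardsU1 pY in W.
  by apply: win1_mono W _; lia.
have [le_k W] := IHno Cn Cn.
by split; [lia | apply: win1_mono W _; lia].
Qed.

Hypothesis adm_pair : forall E, adm E -> forall p, p \in E -> is_pair p.

Lemma identified_win2 Y N E : identified_as adm Y N E -> win2 adm Y N (e - #|Y|).
Proof.
move=> idE; have [[aE YE _] _] := idE; move: idE.
rewrite -(adm_card aE) -(cardsDS YE) => {aE YE}.
move Hm: #|E :\: Y| => m; elim: m Y Hm => [|m IH] Y Hm idE.
  by apply: win2_done idE _; rewrite -setD_eq0 -cards_eq0 Hm.
have [[aE YE dE] uniqE] := idE.
have [p pEY] : exists p, p \in E :\: Y by apply/set0Pn; rewrite -card_gt0 Hm.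
move: (pEY); rewrite inE => /andP[pY pE].
apply: win2_query (adm_pair aE pE) _ _ => [_ | [E' [aE' YE' dE']]].
  apply: IH.
    by rewrite (cardsD1 p (E :\: Y)) pEY setDDl setUC add1n in Hm; case: Hm.
  split; first by split; rewrite // subUset sub1set pE.
  move=> E' [aE' YE' dE']; apply: uniqE; split=> //.
  exact: subset_trans (subsetUr _ _) YE'.
have E'E : E' = E by apply: uniqE; split=> //; exact: disjointWr (subsetUr _ _) dE'.
by move: dE'; rewrite E'E => /disjointFr/(_ pE); rewrite setU11.
Qed.

Lemma win2_of_win1 Y N k : win1 adm Y N k -> consistent adm Y N ->
  win2 adm Y N (k + (e - #|Y|)).
Proof.
move=> W; elim/win1_nested_ind: Y N k / W => [Y N k E idE _ | Y N k p p_pair IHyes IHno C].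
  exact: win2_mono (identified_win2 idE) (leq_addl _ _).
have [pY | pY] := boolP (p \in Y).
  have pYY : p |: Y = Y by apply/setUidPr; rewrite sub1set.
  by move: IHyes; rewrite pYY => /(_ C C).
have budget_gt0 : 0 < k + (e - #|Y|).
  by case: (consistent_answer p C) => [/(consistent_setU1_card pY) | /IHno[]]; lia.
rewrite -(prednK budget_gt0); apply: win2_query p_pair _ _ => [Cy | Cn].
  have lt_Ye := consistent_setU1_card pY Cy.
  by apply: win2_mono (IHyes Cy Cy) _; rewrite cardsU1 pY; lia.
have [k_gt0 W] := IHno Cn.
by apply: win2_mono (W Cn) _; rewrite -{2}(prednK k_gt0) addSn.
Qed.

Definition unqueried (Q : {set {set 'I_n}}) := [set p | is_pair p & p \notin Q].

Lemma card_unqueried_setU1 Q p : p \in unqueried Q ->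
  #|unqueried (p |: Q)| = #|unqueried Q| - 1.
Proof.
move=> pU; have -> : unqueried (p |: Q) = unqueried Q :\ p.
  by apply/setP=> q; rewrite !inE negb_or andbCA.
by rewrite (cardsD1 p (unqueried Q)) pU add1n subn1.
Qed.

(* Querying every pair not queried yet identifies E0, because all edges of an
   admissible set are pairs. *)
Lemma win1_unqueried Y N : consistent adm Y N -> win1 adm Y N #|unqueried (Y :|: N)|.
Proof.
move Hm: #|unqueried (Y :|: N)| => m; elim: m Y N Hm => [|m IH] Y N Hm C.
  have [E CE] := C.
  suff onlyY E' : consistent_with adm Y N E' -> E' = Y.
    by apply: win1_done (conj CE _) => E' /onlyY->; rewrite (onlyY _ CE).
  case=> aE' YE' dE'; apply/eqP; rewrite eqEsubset YE' andbT; apply/subsetP=> p pE'.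
  have : p \notin unqueried (Y :|: N) by rewrite (cards0_eq Hm) inE.
  by rewrite inE (adm_pair aE' pE') negbK in_setU (disjointFr dE' pE') orbF.
have [p pU] : exists p, p \in unqueried (Y :|: N) by apply/set0Pn; rewrite -card_gt0 Hm.
have p_pair : is_pair p by move: pU; rewrite inE => /andP[].
apply: win1_query p_pair _ _ => [Cy | Cn].
  apply: win1_mono (IH _ _ _ Cy) (leqnSn m).
  by rewrite -setUA card_unqueried_setU1 // Hm subn1.
by split=> //; apply: IH Cn; rewrite setUCA card_unqueried_setU1 // Hm subn1.
Qed.

End SearchGame.

Lemma admissible_card (Fam : graph_family) (n e : nat) :
  (forall k (G : {set {set 'I_k}}), Fam k G -> #|G| = e) ->
  forall E, @admissible n Fam E -> #|E| = e.
Proof.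
move=> cardF E [k [G [phi [FG phi_inj ->]]]].
by rewrite card_imset ?(cardF _ _ FG) //; exact: imset_inj.
Qed.

Lemma admissible_pair (Fam : graph_family) (n : nat) :
  (forall k (G : {set {set 'I_k}}), Fam k G -> forall f, f \in G -> #|f| = 2) ->
  forall E, @admissible n Fam E -> forall p, p \in E -> is_pair p.
Proof.
move=> pairF E [k [G [phi [FG phi_inj ->]]]] p /imsetP [f fG ->].
by rewrite /is_pair card_imset // (pairF _ _ FG f fG).
Qed.

Lemma consistent_set0 (Fam : graph_family) n k (G : {set {set 'I_k}}) :
  Fam k G -> k <= n -> consistent (@admissible n Fam) set0 set0.
Proof.
move=> FG le_kn; exists [set widen_ord le_kn @: f | f : {set 'I_k} in G]; split.
- by exists k, G, (widen_ord le_kn); split=> // i j [] /val_inj.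
- exact: sub0set.
- by rewrite -setI_eq0 setI0.
Qed.

Lemma ex_least_nat (P : nat -> Prop) :
  (exists m, P m) -> exists v, P v /\ forall k, P k -> v <= k.
Proof.
move/(@dec_inh_nat_subset_has_unique_least_element P (fun m => classic (P m))).
by case=> v [[Pv least_v] _]; exists v; split=> // k /least_v/leP.
Qed.

Theorem proposition4p2 (Fam : graph_family) (e n : nat) :
  (forall k (G : {set {set 'I_k}}), Fam k G -> forall f, f \in G -> #|f| = 2) ->
  (forall k (G : {set {set 'I_k}}), Fam k G -> #|G| = e) ->
  0 < n ->
  (exists k (G : {set {set 'I_k}}), Fam k G /\ k <= n) ->
  exists v, is_x n Fam v /\ is_x' n Fam (v + e).
Proof.
move=> pairF cardF _ [k0 [G0 [FG0 le_k0n]]].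
have adm_card := admissible_card (n := n) cardF.
have adm_pair := admissible_pair (n := n) pairF.
have C0 := consistent_set0 FG0 le_k0n.
have [v [W least_v]] := ex_least_nat (ex_intro _ _ (win1_unqueried adm_pair C0)).
exists v; split; first exact: conj W least_v.
split; first by have := win2_of_win1 adm_card adm_pair W C0; rewrite cards0 subn0.
move=> k /(win1_of_win2 adm_card)/(_ C0); rewrite cards0 subn0 => -[le_ek /least_v].
lia.
Qed.
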